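(* Let $\psi$ be an additive character of $\mathbb{F}_{q^2}$ of conductor $q^2$. If $\nu$ is any character of $H'$ whose restriction to $H_0'$ equals $\widetilde\psi$, then the representation $\mathrm{Ind}_{H'}^{\mathcal U}(\nu)$ is irreducible.
   Context: Let $p$ be a prime, $q$ a power of $p$, $\ell\ne p$, and $h\ge2$ an integer; representations are over $\overline{\mathbb{Q}}_\ell$. For a commutative $\mathbb{F}_q$-algebra $A$, $U_h^{2,q}(A)$ is the set of formal expressions $1+\sum_{i=1}^{2(h-1)}a_i\tau^i$ ($a_i\in A$) with multiplication obtained by extending $(a\tau^i)(b\tau^j)=ab^{q^i}\tau^{i+j}$ bi-additively, $\tau^0=1$, $\tau^k=0$ for $k>2(h-1)$. In $\mathcal U=U_h^{2,q}(\mathbb{F}_{q^2})$ define $H_0'=\{1+\sum a_i\tau^i: a_i=0\text{ unless } i=2(h-1)\text{ or } i\text{ is odd with } i>h-1\}$; if $h$ is odd, $H'=\{1+\sum a_i\tau^i: a_i=0\text{ for all odd } i\le h-1\}$; if $h$ is even, $H'=\{1+\sum a_i\tau^i: a_i=0\text{ for odd } i<h-1,\ a_{h-1}\in\mathbb{F}_q\}$. An additive character $\psi\colon\mathbb{F}_{q^2}\to\overline{\mathbb{Q}}_\ell^\times$ has conductor $q^2$ if there exists $x$ with $\psi(x^q)\ne\psi(x)$; $\widetilde\psi$ is the character $1+\sum a_i\tau^i\mapsto\psi(a_{2(h-1)})$ of $H_0'$. *)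

From HB Require Import structures.
From mathcomp Require Import all_boot all_order all_algebra all_fingroup all_solvable all_field all_character.
Set Implicit Arguments. Unset Strict Implicit. Unset Printing Implicit Defensive.
Import GRing.Theory Num.Theory.
Local Open Scope ring_scope.

(* The group U_h^{2,q}(F) for F = F_{q^2}, N = 2(h-1).
   A formal element x = 1 + sum_{i=1}^N a_i tau^i is encoded by its
   coefficient vector a : {ffun 'I_N -> F}, with a i = a_{i+1}.
   It is realized faithfully as the permutation of the finite set
   F^{N+1} = {ffun 'I_N.+1 -> F} (truncated twisted polynomials
   v = sum_{k=0}^N v_k tau^k) given by right multiplication v |-> v * x.
   Since mathcomp's permutation product is (s * t) v = t (s v), right
   multiplication makes x |-> (v |-> v*x) a group homomorphism
   (not an anti-homomorphism).  The map is injective (apply to v = 1). *)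

Section Unipotent.
Variables (F : finFieldType) (q N : nat).

Definition tcoef (a : {ffun 'I_N -> F}) (m : nat) : F :=
  if m is m'.+1 then (if (insub m' : option 'I_N) is Some i then a i else 0)
  else 1.

Definition rmulU (a : {ffun 'I_N -> F}) (v : {ffun 'I_N.+1 -> F})
  : {ffun 'I_N.+1 -> F} :=
  [ffun j : 'I_N.+1 => \sum_(k < j.+1) v (inord k) * (tcoef a (j - k)) ^+ (q ^ k)].

Definition Uset : {set {perm {ffun 'I_N.+1 -> F}}} :=
  [set g : {perm {ffun 'I_N.+1 -> F}} | [exists a : {ffun 'I_N -> F}, [forall v, g v == rmulU a v]]].

Definition one_vec : {ffun 'I_N.+1 -> F} :=
  [ffun k : 'I_N.+1 => if k == ord0 then 1 else 0].

(* coefficient a_j of tau^j (for 1 <= j <= N) of the element encoded by g *)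
Definition coefU (g : {perm {ffun 'I_N.+1 -> F}}) (j : nat) : F :=
  g one_vec (inord j).

End Unipotent.

Definition Nh (h : nat) : nat := (h.-1).*2.

(* the group U = U_h^{2,q}(F_{q^2}) (Uset is already a group; <<_>> only
   provides the group structure) *)
Definition Ugrp (F : finFieldType) (q h : nat) :=
  <<Uset F q (Nh h)>>%G.

Definition H0set (F : finFieldType) (q h : nat) :=
  [set g in Uset F q (Nh h) | [forall j : 'I_(Nh h).+1,
     ((0 < j)%N && ((j : nat) != Nh h) && ~~ (odd j && (h.-1 < j)%N))
       ==> (coefU g j == 0)]].
Definition H0grp (F : finFieldType) (q h : nat) := <<H0set F q h>>%G.

Definition Hset (F : finFieldType) (q h : nat) :=
  [set g in Uset F q (Nh h) |
    if odd h then
      [forall j : 'I_(Nh h).+1, (odd j && (j <= h.-1)%N) ==> (coefU g j == 0)]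
    else
      [forall j : 'I_(Nh h).+1, (odd j && (j < h.-1)%N) ==> (coefU g j == 0)]
      && (coefU g h.-1 ^+ q == coefU g h.-1)].
Definition Hgrp (F : finFieldType) (q h : nat) := <<Hset F q h>>%G.

From HB Require Import structures.
From mathcomp Require Import all_boot all_order all_algebra all_fingroup all_solvable all_field all_character.
From mathcomp Require Import zify ring.
Set Implicit Arguments. Unset Strict Implicit. Unset Printing Implicit Defensive.
Import GRing.Theory Num.Theory.
Local Open Scope ring_scope.

(* Ind nu is irreducible as soon as every y outside H' conjugates some a in
   H' into H' with nu (a ^ y) <> nu a.  Let g = y^-1 and let i be the first
   index at which the coefficients of g violate the conditions defining H'; then
   i is odd, i <= h-1 and a_i <> 0.  The truncation of g below i lies in H', and
   the remaining factor g' = 1 + a_i tau^i + ... satisfies g' A = A Z g' for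
   A = 1 + c tau^(N-i) and the central Z = 1 + (a_i c^q - c a_i^q) tau^N, with
   N = 2(h-1).  Since x^(q^2) = x on F_(q^2), c can be chosen with A in H' and
   a_i c^q - c a_i^q = w^q - w, where psi (w^q) <> psi w by the conductor
   assumption; hence nu (A ^ y) = nu A * psi (w^q - w) <> nu A. *)

Section TwistedProduct.
Variables (F : finFieldType) (q N : nat).
Hypothesis frobD : forall x y : F, (x + y) ^+ q = x ^+ q + y ^+ q.

Local Notation V := {ffun 'I_N.+1 -> F}.
Local Notation one := (one_vec F N).

Lemma frob0 : (0 : F) ^+ q = 0.
Proof. by apply: (addrI (0 ^+ q)); rewrite -frobD !addr0. Qed.

Lemma frobXD m (x y : F) : (x + y) ^+ (q ^ m) = x ^+ (q ^ m) + y ^+ (q ^ m).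
Proof. by elim: m => [|m IH]; rewrite ?expr1 // expnSr !exprM IH frobD. Qed.

Lemma frobX0 m : (0 : F) ^+ (q ^ m) = 0.
Proof. by elim: m => [|m IH]; rewrite ?expr1 // expnSr exprM IH frob0. Qed.

Lemma frobX_sum m (I : Type) (r : seq I) (P : pred I) (G : I -> F) :
  (\sum_(i <- r | P i) G i) ^+ (q ^ m) = \sum_(i <- r | P i) G i ^+ (q ^ m).
Proof. by apply: (big_morph (fun x : F => x ^+ (q ^ m))); [exact: frobXD|exact: frobX0]. Qed.

Definition tmul (u w : V) : V :=
  [ffun j : 'I_N.+1 => \sum_(k < j.+1) u (inord k) * w (inord (j - k)) ^+ (q ^ k)].

(* Out of range, [inord] makes [cf u m] the constant coefficient. *)
Definition cf (u : V) (m : nat) : F := u (inord m).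

Lemma cfE (u : V) (m : 'I_N.+1) : cf u m = u m.
Proof. by rewrite /cf inord_val. Qed.

Lemma cf_ext (u w : V) : (forall j, (j <= N)%N -> cf u j = cf w j) -> u = w.
Proof. by move=> E; apply/ffunP => j; rewrite -!cfE E // -ltnS. Qed.

Lemma tmulE (u w : V) j : (j <= N)%N ->
  cf (tmul u w) j = \sum_(0 <= k < j.+1) cf u k * cf w (j - k) ^+ (q ^ k).
Proof. by move=> jN; rewrite /cf ffunE inordK // big_mkord. Qed.

Lemma cf_tmul0 (u w : V) : cf (tmul u w) 0 = cf u 0 * cf w 0.
Proof. by rewrite tmulE // big_nat1 subn0 expr1. Qed.

Lemma cf_one k : (k <= N)%N -> cf one k = if k == 0%N then 1 else 0.
Proof. by move=> kN; rewrite /cf ffunE -val_eqE /= inordK. Qed.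

Lemma sum_nat_only (n k0 : nat) (G : nat -> F) :
  (forall k, (k < n)%N -> k != k0 -> G k = 0) ->
  \sum_(0 <= k < n) G k = if (k0 < n)%N then G k0 else 0.
Proof.
move=> G0; case: ifP => lt.
  rewrite big_mkord (bigD1 (Ordinal lt)) //= big1 ?addr0 // => i ne.
  by apply: G0; rewrite // -val_eqE in ne.
rewrite big_nat_cond big1 // => k /andP[/andP[_ kn] _]; apply: G0 => //.
by apply: contraFneq lt => <-.
Qed.

Lemma sum_triangle_exchange (G : nat -> nat -> F) n :
  \sum_(0 <= k < n) \sum_(0 <= l < k.+1) G l k =
  \sum_(0 <= l < n) \sum_(0 <= m < n - l) G l (l + m)%N.
Proof.
elim: n => [|n IH]; first by rewrite !big_geq.
rewrite big_nat_recr //= IH [RHS]big_nat_recr //= subSnn big_nat1 addn0.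
rewrite big_nat_recr //= addrA; congr (_ + _).
rewrite -big_split /=; apply: eq_big_nat => l /andP[_ ln].
by rewrite subSn ?(ltnW ln) // big_nat_recr //= subnKC // ltnW.
Qed.

Lemma tmul1l (w : V) : tmul one w = w.
Proof.
apply: cf_ext => j jN; rewrite tmulE // (@sum_nat_only _ 0) => [|k kj k0].
  by rewrite cf_one // eqxx mul1r expr1 subn0.
by rewrite cf_one ?(negPf k0) ?mul0r // -ltnS (leq_trans kj).
Qed.

Lemma tmul1r (v : V) : tmul v one = v.
Proof.
have cf_one_sub j k : (j <= N)%N -> cf one (j - k) = if (j - k == 0)%N then 1 else 0.
  by move=> jN; rewrite cf_one // (leq_trans (leq_subr _ _)).
apply: cf_ext => j jN; rewrite tmulE // (@sum_nat_only _ j) => [|k kj kj'].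
  by rewrite ltnSn cf_one_sub // subnn eqxx expr1n mulr1.
by rewrite cf_one_sub // subn_eq0 leqNgt ltn_neqAle kj' -ltnS kj /= frobX0 mulr0.
Qed.

Lemma tmulA (u x y : V) : tmul (tmul u x) y = tmul u (tmul x y).
Proof.
apply: cf_ext => j jN; rewrite !tmulE //.
transitivity (\sum_(0 <= k < j.+1) \sum_(0 <= l < k.+1)
   (cf u l * cf x (k - l) ^+ (q ^ l) * cf y (j - k) ^+ (q ^ k))).
  apply: eq_big_nat => k /andP[_ kj]; rewrite tmulE ?mulr_suml //.
  by rewrite -ltnS (leq_trans kj).
rewrite sum_triangle_exchange; apply: eq_big_nat => l /andP[_ lj].
rewrite tmulE; last exact: leq_trans (leq_subr _ _) jN.
rewrite frobX_sum mulr_sumr subSn; last by rewrite -ltnS.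
apply: eq_big_nat => m _.
by rewrite addKn subnDA exprMn -exprM -expnD addnC mulrA.
Qed.

Lemma tmulI (w : V) : cf w 0 = 1 -> injective (tmul^~ w).
Proof.
move=> w0 v1 v2 /= e; apply: cf_ext => j; elim/ltn_ind: j => j IH jN.
have := congr1 (cf^~ j) e.
rewrite /= !tmulE // !big_nat_recr //= subnn w0 expr1n !mulr1.
rewrite (@eq_big_nat _ _ _ _ _ _ (fun k => cf v2 k * cf w (j - k) ^+ (q ^ k))).
  exact: addrI.
by move=> k /andP[_ kj]; rewrite IH // (leq_trans (ltnW kj)).
Qed.

Definition vec_of_coef (a : {ffun 'I_N -> F}) : V := [ffun m : 'I_N.+1 => tcoef a m].

Lemma rmulUE a v : rmulU q a v = tmul v (vec_of_coef a).
Proof.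
apply/ffunP => j; rewrite !ffunE; apply: eq_bigr => k _; rewrite ffunE inordK //.
by rewrite ltnS (leq_trans (leq_subr _ _)) // -ltnS.
Qed.

Lemma vec_of_coefK (w : V) : cf w 0 = 1 -> vec_of_coef [ffun i : 'I_N => cf w i.+1] = w.
Proof.
move=> w0; apply: cf_ext => [[|m]] mN; rewrite /cf ffunE inordK ?ltnS //= ?w0 //.
by case: insubP => [i _ iv|]; rewrite ?ffunE ?iv // mN.
Qed.

Lemma UsetP (g : {perm V}) :
  reflect (exists2 w, cf w 0 = 1 & forall v, g v = tmul v w) (g \in Uset F q N).
Proof.
rewrite inE; apply: (iffP existsP) => [[a /forallP gE]|[w w0 gE]].
  exists (vec_of_coef a) => [|v]; last by rewrite (eqP (gE v)) rmulUE.
  by rewrite /cf ffunE inordK.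
by exists [ffun i : 'I_N => cf w i.+1]; apply/forallP => v; rewrite rmulUE vec_of_coefK ?gE.
Qed.

Definition cv (g : {perm V}) : V := g one.

Lemma coefU_cv (g : {perm V}) j : coefU g j = cf (cv g) j.
Proof. by []. Qed.

Lemma UsetE (g : {perm V}) : g \in Uset F q N -> forall v, g v = tmul v (cv g).
Proof. by case/UsetP=> w _ gE v; rewrite /cv !gE tmul1l. Qed.

Lemma cv0 (g : {perm V}) : g \in Uset F q N -> cf (cv g) 0 = 1.
Proof. by case/UsetP=> w w0 gE; rewrite /cv gE tmul1l. Qed.

Lemma Uset_of_vec (w : V) : cf w 0 = 1 -> exists2 g, g \in Uset F q N & cv g = w.
Proof.
move=> w0; exists (perm (tmulI w0)); last by rewrite /cv permE tmul1l.
by apply/UsetP; exists w => // v; rewrite permE.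
Qed.

Lemma cv_inj : {in Uset F q N &, injective cv}.
Proof. by move=> g1 g2 U1 U2 e; apply/permP => v; rewrite !UsetE // e. Qed.

Lemma cvM (s t : {perm V}) : t \in Uset F q N -> cv (s * t) = tmul (cv s) (cv t).
Proof. by move=> Ut; rewrite /cv permM UsetE. Qed.

Lemma Uset_group : group_set (Uset F q N).
Proof.
apply/group_setP; split.
  by apply/UsetP; exists one => [|v]; rewrite ?cf_one ?perm1 ?tmul1r.
move=> s t Us Ut; apply/UsetP; exists (tmul (cv s) (cv t)).
  by rewrite cf_tmul0 !cv0 ?mulr1.
by move=> v; rewrite permM !UsetE // tmulA.
Qed.

Definition mono (j : nat) (c : F) : V :=
  [ffun m : 'I_N.+1 => if (m : nat) == 0%N then 1 else if (m : nat) == j then c else 0].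

Lemma cf_mono j c k : (0 < j)%N -> (k <= N)%N ->
  cf (mono j c) k = (if k == 0%N then 1 else 0) + (if k == j then c else 0).
Proof.
move=> j0 kN; rewrite /cf ffunE inordK //.
by case: eqP => [->|]; rewrite ?add0r // eq_sym (negPf (lt0n_neq0 j0)) addr0.
Qed.

Lemma cf_mono0 j c : (0 < j)%N -> cf (mono j c) 0 = 1.
Proof. by move=> j0; rewrite cf_mono // eqxx eq_sym (negPf (lt0n_neq0 j0)) addr0. Qed.

Lemma frobX_if (b : bool) (x : F) m :
  (if b then x else 0) ^+ (q ^ m) = if b then x ^+ (q ^ m) else 0.
Proof. by case: b; rewrite ?frobX0. Qed.

Lemma tmul_mono_r (u : V) j c m : (0 < j)%N -> (m <= N)%N ->
  cf (tmul u (mono j c)) m =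
  cf u m + (if (j <= m)%N then cf u (m - j) * c ^+ (q ^ (m - j)) else 0).
Proof.
move=> j0 mN; rewrite tmulE //.
rewrite (eq_big_nat _ _ (F2 := fun k => (if k == m then cf u k else 0) +
   (if (m - k == j)%N then cf u k * c ^+ (q ^ k) else 0))); last first.
  move=> k /andP[_ km]; rewrite cf_mono ?(leq_trans (leq_subr _ _)) //.
  rewrite frobXD !frobX_if expr1n mulrDr; congr (_ + _).
    rewrite subn_eq0 [k == m]eqn_leq -[(k <= m)%N]ltnS km /=.
    by case: ifP; rewrite ?mulr1 ?mulr0.
  by case: eqP; rewrite ?mulr0.
rewrite big_split /= (@sum_nat_only _ m) => [|k _ /negPf ->] //.
rewrite ltnSn eqxx; congr (_ + _); case: leqP => jm.
  rewrite (@sum_nat_only _ (m - j)%N) => [|k km kne]; first by rewrite ltnS leq_subr subKn // eqxx.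
  by case: eqP => // e; case/eqP: kne; rewrite -e subKn // -ltnS.
rewrite big_nat_cond big1 // => k /andP[/andP[_ km] _].
by case: eqP => // e; move: jm; rewrite -e ltnNge leq_subr.
Qed.

Lemma tmul_mono_l (u : V) j c m : (0 < j)%N -> (m <= N)%N ->
  cf (tmul (mono j c) u) m =
  cf u m + (if (j <= m)%N then c * cf u (m - j) ^+ (q ^ j) else 0).
Proof.
move=> j0 mN; rewrite tmulE //.
rewrite (eq_big_nat _ _ (F2 := fun k => (if k == 0%N then cf u m else 0) +
   (if k == j then c * cf u (m - j) ^+ (q ^ j) else 0))); last first.
  move=> k /andP[_ km]; rewrite cf_mono ?(leq_trans _ mN) // -?ltnS // mulrDl.
  congr (_ + _); first by case: eqP => [->|]; rewrite ?mul0r // mul1r subn0 expr1.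
  by case: eqP => [->|]; rewrite ?mul0r.
rewrite big_split /= (@sum_nat_only _ 0) => [|k _ /negPf ->] //.
rewrite ltnS leq0n eqxx; congr (_ + _).
by rewrite (@sum_nat_only _ j) => [|k _ /negPf ->] //; rewrite ltnS eqxx.
Qed.

Lemma mono_commute (x : V) i c : (0 < i < N)%N -> cf x 0 = 1 ->
    (forall k, (0 < k < i)%N -> cf x k = 0) ->
  tmul x (mono (N - i) c) = tmul (mono (N - i) c)
    (tmul (mono N (cf x i * c ^+ (q ^ i) - c * cf x i ^+ (q ^ (N - i)))) x).
Proof.
move=> /andP[i0 iN] x0 xz; set d := _ - _; set j := (N - i)%N.
have j0 : (0 < j)%N by rewrite subn_gt0.
have N0 : (0 < N)%N by lia.
have jE : j = (N - i)%N by [].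
clearbody j.
apply: cf_ext => m mN; rewrite tmul_mono_r // tmul_mono_l // tmul_mono_l //.
case: (leqP j m) => jm; last by rewrite ifN ?addr0 // -ltnNge; lia.
rewrite tmul_mono_l //; last by lia.
have N_gt : ~~ (N <= m - j)%N by rewrite -ltnNge; lia.
rewrite (ifN _ _ N_gt) addr0 -addrA; congr (_ + _).
case: (posnP (m - j)) => [t0|tp].
  rewrite ifN; last by rewrite -ltnNge; lia.
  by rewrite t0 x0 expr1 expr1n mulr1 mul1r add0r.
case: (ltngtP (m - j) i) => ti; last first.
- rewrite ifT; last by lia.
  have -> : (m - N = 0)%N by lia.
  by rewrite ti x0 expr1n mulr1 /d -jE; ring.
- lia.
- by rewrite ifN ?xz ?tp ?frobX0 ?mulr0 ?mul0r ?add0r // -ltnNge; lia.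
Qed.

Definition trunc (x : V) (i : nat) : V :=
  [ffun m : 'I_N.+1 => if ((m : nat) < i)%N then x m else 0].

Lemma cf_trunc x i k : (k <= N)%N -> cf (trunc x i) k = if (k < i)%N then cf x k else 0.
Proof. by move=> kN; rewrite /cf ffunE inordK. Qed.

Lemma trunc_ldiv (x x' : V) i : (0 < i <= N)%N -> cf x 0 = 1 -> cf x' 0 = 1 ->
    tmul (trunc x i) x' = x ->
  (forall k, (0 < k < i)%N -> cf x' k = 0) /\ cf x' i = cf x i.
Proof.
move=> /andP[i0 iN] x0 x'0 e.
suff x'E m : (0 < m <= i)%N -> cf x' m = if (m < i)%N then 0 else cf x i.
  split; first by move=> k /andP[k0 ki]; rewrite x'E ?ki //; lia.
  by rewrite x'E ?ltnn //; lia.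
elim/ltn_ind: m => m IH /andP[m0 mi].
have mN : (m <= N)%N by apply: leq_trans iN.
have := congr1 (cf^~ m) e; rewrite /= tmulE // big_nat_recr //= big_ltn //=.
rewrite subnn x'0 expr1n mulr1 cf_trunc // subn0 expr1 cf_trunc // i0 x0 mul1r.
rewrite big_nat_cond big1 ?addr0 => [|k /andP[/andP[k1 km] _]]; last first.
  by rewrite IH ?ltn_subrL ?k1 ?ifT ?frobX0 ?mulr0 //; lia.
case: ifP => mi' e'; first by apply: (addIr (cf x m)); rewrite e' add0r.
have -> : i = m by move/negbT: mi'; lia.
by rewrite -e' addr0.
Qed.
End TwistedProduct.

Section InducedLinearChar.
Variables (gT : finGroupType) (G H : {group gT}) (nu : 'CF(H)).
Hypotheses (sHG : H \subset G) (lin_nu : nu \is a linear_char).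

Lemma lin_char_mul_conj x : x \in H -> nu x * (nu x)^* = 1.
Proof.
by move=> Hx; rewrite -lin_charV_conj // lin_charV // divff // lin_char_neq0.
Qed.

Let S y := \sum_(x in H) nu (x ^ y)%g * (nu x)^*.

Let S_in y : y \in H -> S y = #|H|%:R.
Proof.
move=> Hy; rewrite /S (eq_bigr (fun _ => 1)) ?sumr_const // => x Hx.
by rewrite cfunJ // lin_char_mul_conj.
Qed.

(* Translating x by a multiplies the sum by nu (a ^ y) * (nu a)^* <> 1. *)
Let S_out y a : a \in H -> (a ^ y)%g \in H -> nu (a ^ y)%g != nu a -> S y = 0.
Proof.
move=> Ha Hay ne; set lam := nu (a ^ y)%g * (nu a)^*.
have S_lam : S y * lam = S y.
  rewrite /S mulr_suml [RHS](reindex_inj (mulIg a)) /=.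
  apply: eq_big => [x|x Hx]; first by rewrite groupMr.
  rewrite conjMg [nu (x * a)%g]lin_charM // rmorphM /lam /=.
  case Hxy: ((x ^ y)%g \in H); first by rewrite (lin_charM lin_nu Hxy Hay); ring.
  have nH : (x ^ y * a ^ y)%g \notin H by rewrite groupMr // Hxy.
  by rewrite (cfun0 _ (negbT Hxy)) (cfun0 _ nH) !mul0r.
have lam1 : lam != 1.
  apply: contra ne => /eqP l1; apply/eqP.
  by rewrite -[RHS]mulr1 -l1 /lam mulrCA lin_char_mul_conj // mulr1.
apply/eqP; move/eqP: S_lam; rewrite -subr_eq0 -{2}[S y]mulr1 -mulrBr mulf_eq0.
by rewrite subr_eq0 (negPf lam1) orbF.
Qed.

Lemma cfInd_linear_irr :
    (forall y, y \in G -> y \notin H ->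
       exists a, [/\ a \in H, (a ^ y)%g \in H & nu (a ^ y)%g != nu a]) ->
  'Ind[G] nu \in irr G.
Proof.
move=> witness; rewrite irrEchar cfInd_char ?lin_charW //=; apply/eqP.
rewrite -Frobenius_reciprocity cfdotC.
suff -> : '['Res[H] ('Ind[G] nu), nu] = 1 by rewrite rmorph1.
have H_neq0 : #|H|%:R != 0 :> algC by rewrite pnatr_eq0 -lt0n cardG_gt0.
rewrite cfdotE.
transitivity (#|H|%:R^-1 * (#|H|%:R^-1 * \sum_(y in G) S y)).
  congr (_ * _); rewrite /S exchange_big /= mulr_sumr; apply: eq_bigr => x Hx.
  by rewrite cfResE // cfIndE // -mulrA mulr_suml.
rewrite (big_setID H) /= (setIidPr sHG) [X in _ + X]big1 ?addr0; last first.
  move=> y; rewrite inE => /andP[nHy Gy].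
  by have [a [Ha Hay ne]] := witness y Gy nHy; apply: S_out ne.
rewrite (eq_bigr (fun _ => #|H|%:R)) ?sumr_const; last by move=> y; apply: S_in.
by rewrite -[X in _ * (_ * X)]mulr_natr mulKf // mulVf.
Qed.

End InducedLinearChar.

Lemma forall_ord_leqP N (P : pred nat) :
  reflect (forall k, (k <= N)%N -> P k) [forall j : 'I_N.+1, P j].
Proof.
apply: (iffP forallP) => [all_P k kN|all_P j]; last by apply: all_P; rewrite -ltnS.
have kN' : (k < N.+1)%N by rewrite ltnS.
exact: all_P (Ordinal kN').
Qed.

Section UnipotentConjugation.
Variables (F : finFieldType) (q h : nat).
Hypothesis frobD : forall x y : F, (x + y) ^+ q = x ^+ q + y ^+ q.
Hypothesis frob2 : forall y : F, y ^+ (q ^ 2) = y.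
Hypothesis h_ge2 : (2 <= h)%N.

Local Notation N := (Nh h).
Local Notation n := h.-1.
Local Notation V := {ffun 'I_N.+1 -> F}.
Local Notation U := (Uset F q N).

Lemma n_lt_N : (n < N)%N.
Proof. by rewrite /Nh -addnn; lia. Qed.

Lemma odd_h : odd h = ~~ odd n.
Proof. by rewrite -{1}[h]prednK ?(ltnW h_ge2). Qed.

Lemma frob_odd m (y : F) : odd m -> y ^+ (q ^ m) = y ^+ q.
Proof.
move=> om; rewrite -[m]odd_double_half om addnC expnD exprM expn1; congr (_ ^+ q).
by elim: m./2 => [|k IH]; rewrite ?expr1 // doubleS -addn2 expnD exprM IH frob2.
Qed.

(* The condition defining H' at index k, in a form valid for both parities of
   h: for odd h, n is even, so the case k = n never concerns an odd k. *)
Definition Hgood (w : V) (k : nat) : bool :=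
  [|| ~~ odd k, (n < k)%N | if k == n then cf w k ^+ q == cf w k else cf w k == 0].

Lemma Hgood0 (w : V) k : cf w k = 0 -> Hgood w k.
Proof. by move=> wk0; rewrite /Hgood wk0 (frob0 frobD) !eqxx; case: ifP; rewrite !orbT. Qed.

Lemma Hbad_index (w : V) i : ~~ Hgood w i ->
  [/\ odd i, (i <= n)%N, cf w i != 0 & cf w i ^+ q == cf w i -> (i < n)%N].
Proof.
rewrite /Hgood !negb_or negbK -leqNgt => /and3P[oi iln].
rewrite ltn_neqAle iln andbT; case: eqP => [ein|_ wi0]; last by split.
rewrite ein in oi * => wq; split=> //; last by rewrite (negPf wq).
by apply: contraNneq wq => ->; rewrite (frob0 frobD).
Qed.

Lemma HsetP (g : {perm V}) : g \in U ->
  reflect (forall k, (k <= N)%N -> Hgood (cv g) k) (g \in Hset F q h).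
Proof.
move=> Ug; rewrite inE Ug /=.
have HgoodE k : Hgood (cv g) k =
    (odd k && (k <= n)%N) ==> (if k == n then coefU g k ^+ q == coefU g k else coefU g k == 0).
  by rewrite /Hgood; case: (odd k); case: leqP.
case: ifPn => [oh | eh]; have on : odd n = ~~ odd h by rewrite odd_h negbK.
  apply: (iffP (forall_ord_leqP _ (fun k => odd k && (k <= n)%N ==> (coefU g k == 0))));
    by move=> all k kN; have := all k kN; rewrite HgoodE; case: (k =P n) => [-> | _]; rewrite ?on ?oh.
pose P k := odd k && (k < n)%N ==> (coefU g k == 0).
apply: (iffP andP) => [[/(forall_ord_leqP _ P) all_lt fix_n] k kN | all].
  rewrite HgoodE; case: (k =P n) => [-> | /eqP ne]; first by rewrite fix_n implybT.
  by have := all_lt k kN; rewrite /P ltn_neqAle ne.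
split; last by have := all n (ltnW n_lt_N); rewrite HgoodE eqxx leqnn on eh.
apply/(forall_ord_leqP _ P) => k kN; have := all k kN; rewrite HgoodE /P.
case: (k =P n) => [-> | /eqP ne]; first by rewrite ltnn andbF.
by rewrite ltn_neqAle ne.
Qed.

Lemma H0set_sub_Hset : H0set F q h \subset Hset F q h.
Proof.
apply/subsetP => g; rewrite inE => /andP[Ug /(forall_ord_leqP _ (fun k =>
  (0 < k)%N && (k != N) && ~~ (odd k && (n < k)%N) ==> (coefU g k == 0))) g0].
apply/HsetP => // k kN; case ok: (odd k); last by rewrite /Hgood ok.
case: (ltnP n k) => kn; first by rewrite /Hgood kn orbT.
apply: Hgood0; apply/eqP; rewrite -coefU_cv; apply: (implyP (g0 k kN)).
have k0 : (0 < k)%N by case: k ok {kN kn}.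
by rewrite ok [(n < k)%N]ltnNge kn k0 neq_ltn (leq_ltn_trans kn n_lt_N).
Qed.

Lemma Hset_of_vec (w : V) : cf w 0 = 1 -> (forall k, (k <= N)%N -> Hgood w k) ->
  exists2 g, g \in Hset F q h & cv g = w.
Proof.
move=> w0 good; have [g Ug cv_g] := Uset_of_vec q w0.
by exists g => //; apply/HsetP; rewrite ?cv_g.
Qed.

Lemma Hset_first_bad (g : {perm V}) : g \in U -> g \notin Hset F q h ->
  exists i, [/\ (i <= N)%N, ~~ Hgood (cv g) i & forall k, (k < i)%N -> Hgood (cv g) k].
Proof.
move=> Ug nHg; pose P k := (k <= N)%N && ~~ Hgood (cv g) k.
have /existsP[k Pk] : [exists k : 'I_N.+1, P k].
  apply: contraR nHg; rewrite negb_exists => /(forall_ord_leqP _ (fun k => ~~ P k)) noP.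
  by apply/HsetP => // k kN; have := noP k kN; rewrite /P kN negbK.
case: (ex_minnP (ex_intro P _ Pk)) => i /andP[iN bad] i_min.
exists i; split=> // j ji; apply: contraTT (ji) => bad_j.
by rewrite -leqNgt i_min // /P bad_j andbT (leq_trans (ltnW ji) iN).
Qed.

Lemma Hgood_trunc (x : V) i : (forall k, (k < i)%N -> Hgood x k) ->
  forall k, (k <= N)%N -> Hgood (trunc x i) k.
Proof.
move=> good k kN; case: (ltnP k i) => ki; last by apply: Hgood0; rewrite cf_trunc // ltnNge ki.
by rewrite /Hgood cf_trunc // ki; apply: good.
Qed.

Lemma Hgood_mono i c : odd i -> (i <= n)%N -> (i = n -> c ^+ q = c) ->
  forall k, (k <= N)%N -> Hgood (mono N (N - i) c) k.
Proof.
move=> oi iln c_fixed k kN; have NE : N = (n + n)%N by rewrite /Nh addnn.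
have [-> | k0] := posnP k; first by [].
have i0 : (0 < N - i)%N by rewrite subn_gt0 (leq_ltn_trans iln n_lt_N).
have cfk : cf (mono N (N - i) c) k = if k == (N - i)%N then c else 0.
  by rewrite cf_mono // (negPf (lt0n_neq0 k0)) add0r.
case: (k =P (N - i)%N) => [ki | /eqP/negPf ne]; last by apply: Hgood0; rewrite cfk ne.
case: (ltnP n k) => [lt | ge]; first by rewrite /Hgood lt orbT.
have ein : i = n by lia.
have kn : k = n by lia.
by rewrite /Hgood cfk ki eqxx -ki kn eqxx c_fixed // eqxx !orbT.
Qed.

Lemma H0set_of_mono d : exists2 Z, Z \in H0set F q h & cv Z = mono N N d.
Proof.
have N0 : (0 < N)%N by apply: leq_ltn_trans n_lt_N.
have [Z UZ cvZ] := Uset_of_vec q (cf_mono0 N d N0); exists Z => //.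
rewrite inE UZ; apply/(forall_ord_leqP _ (fun k =>
  (0 < k)%N && (k != N) && ~~ (odd k && (n < k)%N) ==> (coefU Z k == 0))) => k kN.
apply/implyP => /andP[/andP[k0 kN'] _].
by rewrite coefU_cv cvZ cf_mono // (negPf (lt0n_neq0 k0)) (negPf kN') addr0.
Qed.

Lemma frobB (x y : F) : (x - y) ^+ q = x ^+ q - y ^+ q.
Proof.
have frobN : (- y) ^+ q = - y ^+ q.
  by apply/eqP; rewrite -subr_eq0 opprK -frobD addNr (frob0 frobD).
by rewrite frobD frobN.
Qed.

Lemma frob_twist_solution (b w0 : F) : b != 0 ->
  exists c, b * c ^+ q - c * b ^+ q = w0 ^+ q - w0 /\ (b ^+ q != b -> c ^+ q = c).
Proof.
move=> b0; have frobK (y : F) : (y ^+ q) ^+ q = y by rewrite -exprM mulnn frob2.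
have [bq | bq] := eqVneq (b ^+ q) b.
  exists (w0 / b); split=> //.
  by rewrite exprMn exprVn bq mulrCA mulfV // mulr1 mulfVK.
(* Numerator and denominator of c both change sign under Frobenius. *)
have bb : b - b ^+ q != 0 by rewrite subr_eq0 eq_sym.
set c := (w0 ^+ q - w0) / (b - b ^+ q).
have cq : c ^+ q = c.
  by rewrite exprMn exprVn !frobB !frobK -[w0 - _]opprB -[b ^+ q - b]opprB invrN mulrNN.
by exists c; rewrite cq [b * c]mulrC -mulrBr mulfVK.
Qed.

Lemma Uset_mono_commute (g A Z : {perm V}) i c :
    g \in U -> A \in U -> Z \in U -> odd i -> (i < N)%N ->
    (forall k, (0 < k < i)%N -> cf (cv g) k = 0) ->
    cv A = mono N (N - i) c ->
    cv Z = mono N N (cf (cv g) i * c ^+ q - c * cf (cv g) i ^+ q) ->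
  (g * A = A * Z * g)%g.
Proof.
move=> Ug UA UZ oi iN gz cvA cvZ; pose UG := Group (Uset_group N frobD).
have i0 : (0 < i)%N by case: i oi {iN gz cvA cvZ}.
have oNi : odd (N - i) by rewrite oddB ?(ltnW iN) // /Nh odd_double oi.
apply: (@cv_inj _ q); rewrite ?(@groupM _ UG) //.
rewrite !(@cvM _ q) ?(@groupM _ UG) // cvA cvZ tmulA //.
have iN' : (0 < i < N)%N by rewrite i0.
by rewrite (mono_commute frobD c iN' (cv0 Ug) gz) !frob_odd.
Qed.

Lemma Hset_conj_witness (g : {perm V}) (w0 : F) : g \in U -> g \notin Hset F q h ->
  exists hh A Z, [/\ hh \in Hset F q h, A \in Hset F q h, Z \in H0set F q h,
     coefU Z N = w0 ^+ q - w0 & (A ^ g^-1 = (A * Z) ^ hh^-1)%g].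
Proof.
move=> Ug nHg; pose UG := Group (Uset_group N frobD).
have Hset_sub k : k \in Hset F q h -> k \in UG by rewrite inE => /andP[].
have [i [iN bad good_lt]] := Hset_first_bad Ug nHg.
have [oi iln b0 b_fixed] := Hbad_index bad.
have i0 : (0 < i)%N by case: i oi {iN bad good_lt iln b0 b_fixed}.
have trunc0 : cf (trunc (cv g) i) 0 = 1 by rewrite cf_trunc // i0 (cv0 Ug).
have [hh Hhh cv_hh] := Hset_of_vec trunc0 (Hgood_trunc good_lt).
set g' := (hh^-1 * g)%g.
have Ug' : g' \in UG by apply: groupM; [rewrite groupV; exact: Hset_sub | exact: Ug].
have g'_quot : tmul q (trunc (cv g) i) (cv g') = cv g.
  by rewrite -cv_hh -(cvM hh Ug') /g' mulKVg.
have i_range : (0 < i <= N)%N by rewrite i0.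
have [g'z g'i] := trunc_ldiv frobD i_range (cv0 Ug) (cv0 Ug') g'_quot.
have [c [cE c_fixed]] := frob_twist_solution w0 b0.
have A0 : cf (mono N (N - i) c) 0 = 1 by rewrite cf_mono0 // subn_gt0 (leq_ltn_trans iln n_lt_N).
have c_fixed' : i = n -> c ^+ q = c.
  by move=> ein; apply/c_fixed/negP => /b_fixed; rewrite ein ltnn.
have [A HA cvA] := Hset_of_vec A0 (Hgood_mono oi iln c_fixed').
have [Z HZ cvZ] := H0set_of_mono (w0 ^+ q - w0).
have N0 : (0 < N)%N by apply: leq_ltn_trans n_lt_N.
exists hh, A, Z; split=> //; first by rewrite coefU_cv cvZ cf_mono // eqxx eqn0Ngt N0 add0r.
have comm : (g' * A = A * Z * g')%g.
  have UZ := Hset_sub _ (subsetP H0set_sub_Hset _ HZ).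
  apply: (Uset_mono_commute Ug' (Hset_sub _ HA) UZ oi (leq_ltn_trans iln n_lt_N) g'z cvA).
  by rewrite cvZ g'i cE.
have eg : g = (hh * g')%g by rewrite /g' mulKVg.
clearbody g'; rewrite /conjg !invgK eg invMg !mulgA.
by rewrite -(mulgA hh g' A) comm !mulgA mulgK.
Qed.


Lemma Ugrp_set : Ugrp F q h = U :> {set _}.
Proof. by rewrite /Ugrp /= gen_set_id ?Uset_group. Qed.

Lemma Hgrp_sub_Ugrp : Hgrp F q h \subset Ugrp F q h.
Proof. by apply: genS; apply/subsetP => x; rewrite inE => /andP[]. Qed.

Lemma H0grp_sub_Hgrp : H0grp F q h \subset Hgrp F q h.
Proof. exact: genS H0set_sub_Hset. Qed.

Lemma coefU1_top : coefU (1 : {perm V}) N = 0.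
Proof.
by rewrite coefU_cv /cv perm1 cf_one // ifN // -lt0n (leq_ltn_trans (leq0n _) n_lt_N).
Qed.

Lemma Ugrp_conj_witness y (w0 : F) : y \in Ugrp F q h -> y \notin Hgrp F q h ->
  exists A Z hh, [/\ A \in Hgrp F q h, Z \in H0grp F q h, hh \in Hgrp F q h,
     coefU Z N = w0 ^+ q - w0 & (A ^ y = (A * Z) ^ hh)%g].
Proof.
move=> Uy nHy; have Uy' : y^-1%g \in U by rewrite -Ugrp_set groupV.
have nHy' : y^-1%g \notin Hset F q h by apply: contra nHy => /mem_gen; rewrite groupV.
have [hh [A [Z [Hhh HA HZ Z_N]]]] := Hset_conj_witness w0 Uy' nHy'.
by rewrite invgK => AyE; exists A, Z, hh^-1%g; rewrite groupV !mem_gen.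
Qed.

End UnipotentConjugation.

Theorem corollary2p4 (p k : nat) (F : finFieldType) (h : nat)
  (pr_p : prime p) (k_gt0 : (0 < k)%N) (cardF : #|F| = ((p ^ k) ^ 2)%N)
  (h_ge2 : (2 <= h)%N)
  (psi : F -> algC)
  (psi_add : forall x y : F, psi (x + y) = psi x * psi y)
  (psi_nz : forall x : F, psi x != 0)
  (psi_cond : exists x : F, psi (x ^+ (p ^ k)) != psi x)
  (nu : 'CF(Hgrp F (p ^ k) h))
  (nu_char : nu \is a character)
  (nu_res : forall x, x \in H0grp F (p ^ k) h ->
     ('Res[H0grp F (p ^ k) h] nu) x = psi (coefU x (Nh h))) :
  'Ind[Ugrp F (p ^ k) h] nu \in irr (Ugrp F (p ^ k) h).
Proof.
set q := (p ^ k)%N.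
have pF : p \in [pchar F] by apply: (@card_finPcharP F p (k * 2)); rewrite // cardF -expnM.
have frobD (x y : F) : (x + y) ^+ q = x ^+ q + y ^+ q.
  by apply: exprDn_pchar; rewrite (eq_pnat _ (pcharf_eq pF)) pnatX pnat_id.
have frob2 (y : F) : y ^+ (q ^ 2) = y by rewrite -cardF expf_card.
have sH0H := H0grp_sub_Hgrp frobD h_ge2.
have nuE x : x \in H0grp F q h -> nu x = psi (coefU x (Nh h)).
  by move=> Hx; rewrite -nu_res // cfResE.
have lin_nu : nu \is a linear_char.
  apply/andP; split=> //; apply/eqP; rewrite nuE ?group1 // coefU1_top //.
  by apply: (mulfI (psi_nz 0)); rewrite mulr1 -psi_add addr0.
apply: (cfInd_linear_irr (Hgrp_sub_Ugrp F q h) lin_nu) => y Uy nHy.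
have [w0 w0_moved] := psi_cond.
have [A [Z [hh [HA HZ Hhh Z_N AyE]]]] := Ugrp_conj_witness frobD frob2 h_ge2 w0 Uy nHy.
have HZ' := subsetP sH0H Z HZ.
exists A; split; rewrite ?AyE ?groupJ ?groupM //.
rewrite cfunJ ?groupM // lin_charM // [nu Z]nuE // Z_N.
apply: contra w0_moved => /eqP nuAZ; apply/eqP.
have psiZ : psi (w0 ^+ q - w0) = 1.
  by apply: (mulfI (lin_char_neq0 lin_nu HA)); rewrite mulr1.
by rewrite -[w0 ^+ q](subrK w0) psi_add psiZ mul1r.
Qed.
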